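(* Let $k\geq 2$ be an integer such that $n=2k+1$ is prime. Then there is a connected $k$-colouring of the edges of $K_n$ in which exactly $\frac{k(k-2)}{3}$ distinct $3$-sets of colours occur as colour sets of multicoloured triangles.
   Context: A $k$-colouring of the edges of the complete graph $K_n$ (colours from $\{1,\dots,k\}$) is called connected if for each colour $i$ the edges of colour $i$ form a connected spanning subgraph of $K_n$. A triangle is multicoloured if its three edges have three distinct colours; its colour set is the set of these three colours. *)

From mathcomp Require Import all_boot.
Set Implicit Arguments. Unset Strict Implicit. Unset Printing Implicit Defensive.

(* An edge k-colouring of K_n: vertices 'I_n, colours 'I_k (standing for 1..k),
   given as a function on ordered pairs; only its values on pairs of distinct
   vertices matter, and it must be symmetric there. *)
Definition edge_colouring (n k : nat) (c : 'I_n -> 'I_n -> 'I_k) : Prop :=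
  forall x y : 'I_n, x != y -> c x y = c y x.

Definition colour_class (n k : nat) (c : 'I_n -> 'I_n -> 'I_k) (i : 'I_k)
  : rel 'I_n := fun u v => (u != v) && (c u v == i).

Definition connected_colouring (n k : nat) (c : 'I_n -> 'I_n -> 'I_k) : Prop :=
  forall (i : 'I_k) (x y : 'I_n), connect (colour_class c i) x y.

Definition multicoloured (n k : nat) (c : 'I_n -> 'I_n -> 'I_k) (x y z : 'I_n)
  : bool :=
  [&& x != y, y != z, x != z,
      c x y != c y z, c y z != c x z & c x y != c x z].

Definition triangle_colour_sets (n k : nat) (c : 'I_n -> 'I_n -> 'I_k)
  : {set {set 'I_k}} :=
  [set [set c t.1.1 t.1.2; c t.1.2 t.2; c t.1.1 t.2]
    | t : 'I_n * 'I_n * 'I_n & multicoloured c t.1.1 t.1.2 t.2].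

From mathcomp Require Import all_boot all_algebra.
From mathcomp Require Import zify ring.
Set Implicit Arguments. Unset Strict Implicit. Unset Printing Implicit Defensive.
Import GRing.Theory.
Local Open Scope ring_scope.

(* Write n = 2k + 1 and colour the edge xy of K_n, with vertices in Z/nZ, by
   the distance between x and y in the cyclic order; there are k such
   distances.  A colour class is the circulant graph generated by a nonzero
   d, which is connected because n is prime.  A triangle has side differences
   u, v, -(u + v) with zero sum, and it is multicoloured iff these three are
   nonzero with distinct distances.  There are (n - 1)(n - 5) such pairs
   (u, v), and two of them give the same colour set iff they differ by a
   permutation of the zero-sum triple and a global sign: since 2a <> 0, no
   other sign pattern sums to zero.  Hence there are (n - 1)(n - 5)/12 =
   k(k - 2)/3 colour sets. *)

Section PrimeResidues.

Variable p : nat.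
Local Notation Zp := 'I_p.+2.

Lemma val_Zp_natr c : (c < p.+2)%N -> (c%:R : Zp) = c :> nat.
Proof. by move=> lt_c; rewrite Zp_nat /= modn_small. Qed.

Lemma Zp_mulrn_char (x : Zp) : x *+ p.+2 = 0.
Proof. by rewrite -mulr_natr (pchar_Zp (isT : 1 < p.+2)%N) mulr0. Qed.

Lemma Zp_mulrn_subn (x : Zp) c : (c <= p.+2)%N -> x *+ (p.+2 - c) = - (x *+ c).
Proof. by move=> le_c; apply/eqP; rewrite -addr_eq0 -mulrnDr subnK ?Zp_mulrn_char. Qed.

Lemma val_Zp_opp (x : Zp) : x != 0 -> - x = (p.+2 - x)%N :> nat.
Proof. by move=> nz_x; rewrite /= modn_small // ltn_subrL andbT lt0n. Qed.

Hypothesis p_pr : prime p.+2.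

Lemma Zp_unitfE (x : Zp) : (x \is a GRing.unit) = (x != 0).
Proof.
apply/idP/idP => [|nz_x]; first by apply: contraL => /eqP ->; rewrite unitr0.
have := @unitZpE p.+2 x isT; rewrite natr_Zp => ->.
rewrite prime_coprime //; apply: contra nz_x => /dvdn_leq; rewrite lt0n => le_px.
apply/eqP/val_inj => /=; have := ltn_ord x; lia.
Qed.

Lemma Zp_mulrn_inj (x : Zp) c d : x != 0 -> (c < p.+2)%N -> (d < p.+2)%N ->
  x *+ c = x *+ d -> c = d.
Proof.
rewrite -Zp_unitfE => Ux lt_c lt_d.
rewrite -[x *+ c]mulr_natr -[x *+ d]mulr_natr => /(mulrI Ux)/(congr1 (@nat_of_ord _)).
by rewrite !val_Zp_natr.
Qed.

Lemma Zp_mulrn_eq0 (x : Zp) c : (c < p.+2)%N -> (x *+ c == 0) = (x == 0) || (c == 0%N).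
Proof.
move=> lt_c; have [-> | nz_x] := eqVneq x 0; first by rewrite mul0rn eqxx.
apply/eqP/eqP => [| ->]; last exact: mulr0n.
by rewrite -(mulr0n x); apply: Zp_mulrn_inj.
Qed.

End PrimeResidues.

Section DifferenceColouring.

Variable k : nat.
Local Notation n := (2 * k)%N.+3.

(* Colours are numbered from 0, so distance d gets colour d - 1; [colour 0]
   is a junk value. *)
Definition colour (x : 'I_n) : 'I_k.+1 := inord (minn x (n - x)).-1.

Definition diff_colouring (x y : 'I_n) : 'I_k.+1 := colour (x - y).

Lemma val_colour (x : 'I_n) : colour x = (minn x (n - x)).-1 :> nat.
Proof. by rewrite /= inordK //; have := ltn_ord x; lia. Qed.

Lemma colourN (x : 'I_n) : colour (- x) = colour x.
Proof.
have [-> | nz_x] := eqVneq x 0; first by rewrite oppr0.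
by apply: val_inj; rewrite /= !val_colour val_Zp_opp // subKn 1?minnC // ltnW.
Qed.

Lemma colour_eqE (x y : 'I_n) : x != 0 -> y != 0 ->
  (colour x == colour y) = (y == x) || (y == - x).
Proof.
move=> nz_x nz_y; rewrite -val_eqE -[y == x]val_eqE -[y == - x]val_eqE /=.
rewrite !val_colour modn_small; last by rewrite ltn_subrL andbT lt0n.
move: nz_x nz_y; rewrite -!lt0n; have := ltn_ord x; have := ltn_ord y.
by do ![case: eqP] => //= *; lia.
Qed.

Lemma colour_natr (i : 'I_k.+1) : colour i.+1%:R = i.
Proof.
by apply: val_inj; rewrite /= val_colour val_Zp_natr; have := ltn_ord i; lia.
Qed.

Lemma Zn_half (u : 'I_n) : u = (u *+ k.+2) *+ 2.
Proof.
rewrite -mulrnA (_ : (k.+2 * 2 = n.+1)%N); last lia.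
by rewrite mulrSr Zp_mulrn_char add0r.
Qed.

Lemma diff_colouring_sym : edge_colouring diff_colouring.
Proof. by move=> x y _; rewrite /diff_colouring -opprB colourN. Qed.

Definition rainbow (a b c : 'I_n) : bool :=
  [&& a != 0, b != 0, c != 0,
      colour a != colour b, colour b != colour c & colour a != colour c].

(* The pair (u, v) stands for the triangles with side differences
   u, v and -(u + v). *)
Definition rainbow_pairs : {set 'I_n * 'I_n} :=
  [set w | rainbow w.1 w.2 (- (w.1 + w.2))].

Definition pair_colours (w : 'I_n * 'I_n) : {set 'I_k.+1} :=
  [set colour w.1; colour w.2; colour (- (w.1 + w.2))].

Lemma triangle_colour_sets_diff :
  triangle_colour_sets diff_colouring = pair_colours @: rainbow_pairs.
Proof.
have sum_diffs (x y z : 'I_n) : - (x - y + (y - z)) = - (x - z) by ring.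
apply/setP => s; apply/imsetP/imsetP => [[[[x y] z]] | [[u v]]].
- rewrite inE /= => mc_xyz ->; exists (x - y, y - z).
    by rewrite inE /= sum_diffs /rainbow !subr_eq0 oppr_eq0 subr_eq0 colourN.
  by rewrite /pair_colours /= sum_diffs colourN.
- rewrite inE /= => rb_uv ->; exists (u + v, v, 0); rewrite /diff_colouring ?inE /=.
    move: rb_uv; rewrite /multicoloured /rainbow /diff_colouring !subr0 addrK.
    by rewrite -[u + v == v]subr_eq0 addrK oppr_eq0 colourN.
  by rewrite /pair_colours /= !subr0 addrK colourN.
Qed.

Hypothesis n_prime : prime n.

Lemma diff_colouring_connected : connected_colouring diff_colouring.
Proof.
move=> i x y; pose d : 'I_n := i.+1%:R.
have nz_d : d != 0.
  by apply/eqP => /(congr1 (@nat_of_ord _)); rewrite val_Zp_natr //; have := ltn_ord i; lia.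
have step j : connect (colour_class diff_colouring i) x (x + d *+ j).
  elim: j => [|j IHj]; first by rewrite mulr0n addr0 connect0.
  apply: connect_trans IHj (connect1 _).
  have E : x + d *+ j - (x + d *+ j.+1) = - d by rewrite mulrS; ring.
  by rewrite /colour_class /diff_colouring E colourN colour_natr eqxx andbT -subr_eq0 E oppr_eq0.
have Ud : d \is a GRing.unit by rewrite Zp_unitfE.
by have := step (d^-1 * (y - x)); rewrite -mulr_natr natr_Zp mulVKr // addrC subrK.
Qed.

Lemma Zn_double_neq0 (a : 'I_n) : a != 0 -> a *+ 2 != 0.
Proof. by rewrite Zp_mulrn_eq0 ?orbF. Qed.

Definition signed_pairs (a1 a2 a3 : 'I_n) : seq ('I_n * 'I_n) :=
  [:: (a1, a2); (a2, a1); (a1, a3); (a3, a1); (a2, a3); (a3, a2);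
      (- a1, - a2); (- a2, - a1); (- a1, - a3); (- a3, - a1); (- a2, - a3); (- a3, - a2)].

Lemma rainbow_colour_cases (a1 a2 a3 x : 'I_n) : rainbow a1 a2 a3 -> x != 0 ->
  colour x \in [set colour a1; colour a2; colour a3] ->
  x = a1 \/ x = - a1 \/ x = a2 \/ x = - a2 \/ x = a3 \/ x = - a3.
Proof.
case/and4P=> nz_a1 nz_a2 nz_a3 _ nz_x; rewrite !inE.
by case/orP => [/orP[] |]; rewrite eq_sym colour_eqE // => /orP[] /eqP ->; tauto.
Qed.

Ltac zero_sum_absurd nz2 sum :=
  apply: (negP nz2);
  first [ apply/eqP; rewrite -sum; ring | rewrite -oppr_eq0; apply/eqP; rewrite -sum; ring ].

Lemma rainbow_same_colours (a1 a2 b1 b2 : 'I_n) :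
  rainbow a1 a2 (- (a1 + a2)) -> rainbow b1 b2 (- (b1 + b2)) ->
  pair_colours (b1, b2) = pair_colours (a1, a2) ->
  (b1, b2) \in signed_pairs a1 a2 (- (a1 + a2)).
Proof.
rewrite /pair_colours /=; set a3 := - (a1 + a2); set b3 := - (b1 + b2).
have sum_b : b1 + b2 + b3 = 0 by rewrite addrN.
move=> rb_a rb_b same_cols; clearbody b3.
have cases x := @rainbow_colour_cases a1 a2 a3 x rb_a.
rewrite -same_cols in cases.
have mem1 : colour b1 \in [set colour b1; colour b2; colour b3] by rewrite !inE eqxx.
have mem2 : colour b2 \in [set colour b1; colour b2; colour b3] by rewrite !inE eqxx orbT.
have mem3 : colour b3 \in [set colour b1; colour b2; colour b3] by rewrite !inE eqxx !orbT.
case/and4P: rb_b => nz_b1 nz_b2 nz_b3 /and3P[ne12 ne23 ne13].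
have [E1|[E1|[E1|[E1|[E1|E1]]]]] := cases b1 nz_b1 mem1;
have [E2|[E2|[E2|[E2|[E2|E2]]]]] := cases b2 nz_b2 mem2;
rewrite {}E1 {}E2 in ne12 ne13 ne23 sum_b *;
try by rewrite /signed_pairs !in_cons ?xpair_eqE ?eqxx ?orbT.
all: try by move: ne12; rewrite ?colourN eqxx.
all: case/and4P: rb_a => nz_a1 nz_a2 nz_a3 _.
all: have nz2_a1 := Zn_double_neq0 nz_a1; have nz2_a2 := Zn_double_neq0 nz_a2.
all: have nz2_a3 := Zn_double_neq0 nz_a3.
all: have [E3|[E3|[E3|[E3|[E3|E3]]]]] := cases b3 nz_b3 mem3;
  rewrite {}E3 in ne13 ne23 sum_b;
  try by move: ne13; rewrite ?colourN eqxx.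
all: try by move: ne23; rewrite ?colourN eqxx.
all: exfalso; rewrite /a3 in sum_b nz2_a3.
all: first [ zero_sum_absurd nz2_a1 sum_b | zero_sum_absurd nz2_a2 sum_b
           | zero_sum_absurd nz2_a3 sum_b ].
Qed.

Ltac rewrite_third def a1 a2 a3 :=
  match goal with |- context [- (?x + ?y)] =>
    first [ have -> : - (x + y) = a1 by rewrite def; ring
          | have -> : - (x + y) = - a1 by rewrite def; ring
          | have -> : - (x + y) = a2 by rewrite def; ring
          | have -> : - (x + y) = - a2 by rewrite def; ring
          | have -> : - (x + y) = a3 by rewrite def; ring
          | have -> : - (x + y) = - a3 by rewrite def; ring ]
  end.

Lemma signed_pairs_rainbow (a1 a2 b1 b2 : 'I_n) :
  rainbow a1 a2 (- (a1 + a2)) -> (b1, b2) \in signed_pairs a1 a2 (- (a1 + a2)) ->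
  rainbow b1 b2 (- (b1 + b2)) /\ pair_colours (b1, b2) = pair_colours (a1, a2).
Proof.
rewrite /pair_colours /=; set a3 := - (a1 + a2) => rb_a.
have def_a3 : a3 = - (a1 + a2) by []; clearbody a3.
case/and4P: (rb_a) => nz_a1 nz_a2 nz_a3 /and3P[ne12 ne23 ne13].
have ne21 : colour a2 != colour a1 by rewrite eq_sym.
have ne32 : colour a3 != colour a2 by rewrite eq_sym.
have ne31 : colour a3 != colour a1 by rewrite eq_sym.
rewrite /signed_pairs !in_cons in_nil orbF.
do 11? (case/orP; [move/eqP => [-> ->] | ]); try move/eqP => [-> ->];
rewrite_third def_a3 a1 a2 a3; split;
  rewrite /rainbow ?oppr_eq0 ?colourN ?nz_a1 ?nz_a2 ?nz_a3 //=;
  rewrite ?(negbTE ne12) ?(negbTE ne23) ?(negbTE ne13);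
  rewrite ?(negbTE ne21) ?(negbTE ne32) ?(negbTE ne31) //.
all: by apply/setP => x; rewrite !inE;
  case: (x == colour a1); case: (x == colour a2); case: (x == colour a3).
Qed.

Lemma colour_neq_eqF (x y : 'I_n) : colour x != colour y ->
  ((x == y) = false) * ((x == - y) = false) * ((- x == y) = false) * ((- x == - y) = false).
Proof.
move=> ne_xy; do !split; apply/negbTE; apply: contra ne_xy => /eqP E.
- by rewrite E.
- by rewrite E colourN.
- by rewrite -E colourN.
- by rewrite -(colourN x) E colourN.
Qed.

Lemma Zn_oppF (x : 'I_n) : x != 0 -> ((x == - x) = false) * ((- x == x) = false).
Proof.
move=> nz_x; have nz2_x := Zn_double_neq0 nz_x.
split; apply/negbTE; apply: contra nz2_x => /eqP E; rewrite mulr2n.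
- by rewrite {1}E addNr.
- by rewrite -{1}E addNr.
Qed.

Lemma uniq_signed_pairs (a1 a2 a3 : 'I_n) : rainbow a1 a2 a3 -> uniq (signed_pairs a1 a2 a3).
Proof.
case/and4P=> nz_a1 nz_a2 nz_a3 /and3P[ne12 ne23 ne13].
have ne21 : colour a2 != colour a1 by rewrite eq_sym.
have ne32 : colour a3 != colour a2 by rewrite eq_sym.
have ne31 : colour a3 != colour a1 by rewrite eq_sym.
rewrite /signed_pairs /= !inE !xpair_eqE !eqxx.
rewrite !(colour_neq_eqF ne12, colour_neq_eqF ne23, colour_neq_eqF ne13).
rewrite !(colour_neq_eqF ne21, colour_neq_eqF ne32, colour_neq_eqF ne31).
by rewrite !(Zn_oppF nz_a1, Zn_oppF nz_a2, Zn_oppF nz_a3).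
Qed.

Lemma pair_colours_fibre (w : 'I_n * 'I_n) : w \in rainbow_pairs ->
  [set w' in rainbow_pairs | pair_colours w' == pair_colours w] =
  [set w' in signed_pairs w.1 w.2 (- (w.1 + w.2))].
Proof.
case: w => a1 a2; rewrite inE /= => rb_a.
apply/setP => [[b1 b2]]; rewrite !in_set /=.
apply/andP/idP => [[rb_b /eqP same_cols] | mem_b].
- exact: rainbow_same_colours rb_a rb_b same_cols.
- by have [-> ->] := signed_pairs_rainbow rb_a mem_b.
Qed.

Lemma card_rainbow_pairs_fibres :
  #|rainbow_pairs| = (12 * #|pair_colours @: rainbow_pairs|)%N.
Proof.
rewrite -sum1_card (partition_big_imset pair_colours) /= (mulnC 12) -sum_nat_const.
apply: eq_bigr => _ /imsetP[w rb_w ->].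
have rb : rainbow w.1 w.2 (- (w.1 + w.2)) by rewrite inE in rb_w.
transitivity #|[set w' in rainbow_pairs | pair_colours w' == pair_colours w]|.
  by rewrite -sum1_card; apply: eq_bigl => w'; rewrite !inE.
by rewrite (pair_colours_fibre rb_w) cardsE (card_uniqP (uniq_signed_pairs rb)).
Qed.

Hypothesis k_gt0 : (0 < k)%N.

(* With u = 2t, the forbidden v are 0 and -u (a zero side), u (same colour
   as u), -2u (third side equal to u) and -t (third side equal to v). *)
Lemma rainbow_row (t v : 'I_n) : t != 0 ->
  rainbow (t *+ 2) v (- (t *+ 2 + v)) =
  (v \notin [:: 0; t *+ 2; - (t *+ 2); - (t *+ 4); - t]).
Proof.
move=> nz_t; have nz_u := Zn_double_neq0 nz_t.
have diffE (a b c : 'I_n) : a - b = c -> (a == b) = (c == 0) by move <-; rewrite subr_eq0.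
have [-> | nz_v] := eqVneq v 0; first by rewrite /rainbow eqxx andbF inE eqxx.
have [-> | ne_v] := eqVneq v (- (t *+ 2)).
  by rewrite /rainbow subrr oppr0 eqxx !andbF !inE eqxx !orbT.
have nz_w : - (t *+ 2 + v) != 0 by rewrite oppr_eq0 addrC addr_eq0.
rewrite /rainbow nz_u nz_v nz_w !colour_eqE //= (negbTE ne_v) orbF.
set w := - (t *+ 2 + v).
rewrite (diffE w v (- ((v + t) *+ 2))); last by rewrite /w; ring.
rewrite (diffE w (- v) (- (t *+ 2))); last by rewrite /w; ring.
rewrite (diffE w (t *+ 2) (- (v + t *+ 4))); last by rewrite /w; ring.
rewrite (diffE w (- (t *+ 2)) (- v)); last by rewrite /w; ring.
rewrite !oppr_eq0 Zp_mulrn_eq0 // orbF (negbTE nz_u) (negbTE nz_v) !orbF !addr_eq0.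
rewrite !inE (negbTE nz_v) (negbTE ne_v) /=.
by case: (v == t *+ 2); case: (v == - t); case: (v == - (t *+ 4)).
Qed.

Lemma card_rainbow_row (u : 'I_n) : u != 0 ->
  #|[set v | rainbow u v (- (u + v))]| = (n - 5)%N.
Proof.
have [t ->] : exists t, u = t *+ 2 := ex_intro _ _ (Zn_half u).
move=> nz_u; have nz_t : t != 0 by apply: contraNneq nz_u => ->; rewrite mul0rn.
have -> : [set v | rainbow (t *+ 2) v (- (t *+ 2 + v))] =
          ~: [set v in [:: 0; t *+ 2; - (t *+ 2); - (t *+ 4); - t]].
  by apply/setP => v; rewrite in_setC !in_set rainbow_row.
rewrite cardsCs setCK card_ord cardsE.
have -> : [:: 0; t *+ 2; - (t *+ 2); - (t *+ 4); - t] =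
          [seq t *+ c | c <- [:: 0; 2; n - 2; n - 4; n - 1]%N].
  by rewrite /= !Zp_mulrn_subn ?mulr0n ?mulr1n //; lia.
rewrite (card_uniqP _) ?map_inj_in_uniq //= ?inE; first lia.
by move=> c d; rewrite !inE => c_s d_s; apply: Zp_mulrn_inj nz_t _ _; lia.
Qed.

Lemma card_rainbow_pairs : #|rainbow_pairs| = ((n - 1) * (n - 5))%N.
Proof.
have -> : #|rainbow_pairs| = (\sum_u #|[set v | rainbow u v (- (u + v))]|)%N.
  symmetry; under eq_bigr => u _ do rewrite -sum1_card big_mkcond /=.
  rewrite pair_big /= -sum1_card [RHS]big_mkcond /=.
  by apply: eq_bigr => -[u v] _; rewrite !inE.
rewrite (bigD1 0) //= (eq_card0 (A := [set v | _])); last by move=> v; rewrite inE.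
rewrite add0n (eq_bigr (fun _ => n - 5)%N) => [|u]; last exact: card_rainbow_row.
by rewrite sum_nat_const cardC1 card_ord.
Qed.

Lemma card_triangle_colour_sets :
  #|triangle_colour_sets diff_colouring| = (k.+1 * (k.+1 - 2) %/ 3)%N.
Proof.
have := card_rainbow_pairs_fibres; rewrite card_rainbow_pairs triangle_colour_sets_diff.
move: #|_| => s card_s; have -> : (k.+1 * (k.+1 - 2) = 3 * s)%N by nia.
by rewrite mulKn.
Qed.

End DifferenceColouring.

Local Close Scope ring_scope.

Theorem proposition3 (k : nat) :
  2 <= k -> prime (2 * k + 1) ->
  exists c : 'I_(2 * k + 1) -> 'I_(2 * k + 1) -> 'I_k,
    [/\ edge_colouring c, connected_colouring c &
        #|triangle_colour_sets c| = k * (k - 2) %/ 3].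
Proof.
case: k => [// | k] k_ge2; rewrite (_ : 2 * k.+1 + 1 = (2 * k).+3); last lia.
move=> n_prime; have k_gt0 : 0 < k by lia.
exists (@diff_colouring k); split.
- exact: diff_colouring_sym.
- exact: diff_colouring_connected.
- exact: card_triangle_colour_sets.
Qed.
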